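(* Let $G$ be a compact group with Haar probability measure $dg$, acting linearly and continuously on a finite-dimensional real vector space $V$. Fix $v\in V$ and a linear function $\ell:V\to\mathbb{R}$, let $f(g)=\ell(gv)$, and let $k$ be a positive integer. Then $$\|f\|_{2k}\le\|f\|_\infty\le \binom{\dim V+k-1}{k}^{1/(2k)}\|f\|_{2k}.$$
   Context: For $f:G\to\mathbb{R}$, $\|f\|_\infty=\max_{g\in G}|f(g)|$ and $\|f\|_{2k}=\left(\int_G f^{2k}(g)\,dg\right)^{1/(2k)}$. *)

From HB Require Import structures.
From mathcomp Require Import all_boot all_order all_algebra.
From mathcomp Require Import monoid.
From mathcomp Require Import all_classical all_reals all_analysis.
Set Implicit Arguments. Unset Strict Implicit. Unset Printing Implicit Defensive.

(* A topological group: a group (monoid.v's groupType) whose carrier is also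
   a topological space (continuity of the operations is imposed as hypotheses). *)
HB.structure Definition TopGroup := {G of Group G & PointedTopological G}.

(* Let W be the span of the degree-k monomials in the coordinates of g v,
   a space of continuous functions on G of dimension at most m = C(n+k-1, k)
   that contains every left translate of f^k.  A continuous function with
   vanishing L^2 norm is zero, because Haar measure charges every nonempty
   open set of the compact group; so Gram-Schmidt yields an L^2-orthonormal
   basis e_1, ..., e_p of W.  The kernel K = e_1^2 + ... + e_p^2 integrates
   to p <= m, and Cauchy-Schwarz gives h(y)^2 <= ||h||_2^2 K(y) for h in W.
   Applied to h(t) = f(g y^-1 t)^k, whose L^2 norm is ||f||_2k^k by
   invariance and with h(y) = f(g)^k, and integrated in y, this yields
   f(g)^2k <= m ||f||_2k^2k.  The lower bound holds since dg has mass one. *)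

From HB Require Import structures.
From mathcomp Require Import all_boot all_order all_algebra.
From mathcomp Require Import monoid.
From mathcomp Require Import all_classical all_reals all_analysis.
From mathcomp Require Import ring lra.
Import Order.TTheory GRing.Theory Num.Theory.
Import numFieldNormedType.Exports.
Local Open Scope classical_set_scope.
Local Open Scope ring_scope.

Lemma CauchySchwarz_sum (R : realFieldType) p (a b : 'I_p -> R) :
  (\sum_(j < p) a j * b j) ^+ 2 <= (\sum_(j < p) a j ^+ 2) * (\sum_(j < p) b j ^+ 2).
Proof.
have sum_mul (u w : 'I_p -> R) :
    (\sum_(j < p) u j) * (\sum_(j < p) w j) = \sum_(i < p) \sum_(j < p) u i * w j.
  by rewrite big_distrl /=; apply: eq_bigr => i _; rewrite big_distrr.
have lagrange : 2 * ((\sum_(j < p) a j ^+ 2) * (\sum_(j < p) b j ^+ 2)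
    - (\sum_(j < p) a j * b j) ^+ 2)
    = \sum_(i < p) \sum_(j < p) (a i * b j - a j * b i) ^+ 2.
  rewrite expr2 !sum_mul mulrBr mulr_natl mulr2n [X in _ + X - _]exchange_big.
  rewrite -big_split /= mulr_sumr -sumrB; apply: eq_bigr => i _.
  rewrite -big_split /= mulr_sumr -sumrB; apply: eq_bigr => j _.
  by ring.
rewrite -subr_ge0 -(@pmulr_rge0 _ 2) // lagrange.
by apply: sumr_ge0 => i _; apply: sumr_ge0 => j _; apply: sqr_ge0.
Qed.

Section OrthonormalExpansion.
Context {d} {T : measurableType d} {R : realType} (mu : {measure set T -> \bar R}).
Variable P : (T -> R) -> Prop.
Hypothesis P_cst : forall c, P (fun _ => c).
Hypothesis PD : forall {f g}, P f -> P g -> P (fun x => f x + g x).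
Hypothesis PM : forall {f g}, P f -> P g -> P (fun x => f x * g x).
Hypothesis P_integrable : forall {f}, P f -> mu.-integrable setT (EFin \o f).

Definition dot (f g : T -> R) := \int[mu]_x (f x * g x).

Hypothesis dot_eq0 : forall {f}, P f -> dot f f = 0 -> forall x, f x = 0.

Lemma PZ c {f} : P f -> P (fun x => c * f x).
Proof. exact: PM (P_cst c). Qed.

Lemma PB f g : P f -> P g -> P (fun x => f x - g x).
Proof.
move=> Pf Pg; have := PD Pf (PZ (-1) Pg).
by congr P; apply: funext => x; rewrite mulN1r.
Qed.

Lemma P_sum (I : Type) (r : seq I) (F : I -> T -> R) :
  (forall i, P (F i)) -> P (fun x => \sum_(i <- r) F i x).
Proof.
move=> PF; elim: r => [|i r IH]; first by under [fun x => _]funext do rewrite big_nil.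
by under [fun x => _]funext do rewrite big_cons; apply: PD.
Qed.

Lemma dotC f g : dot f g = dot g f.
Proof. by rewrite /dot; under eq_Rintegral do rewrite mulrC. Qed.

Lemma dot_ge0 f : 0 <= dot f f.
Proof. by apply: Rintegral_ge0 => x _; rewrite -expr2 sqr_ge0. Qed.

Lemma dotDl f g h : P f -> P g -> P h ->
  dot (fun x => f x + g x) h = dot f h + dot g h.
Proof.
move=> Pf Pg Ph; rewrite /dot; under eq_Rintegral do rewrite mulrDl.
by rewrite RintegralD //; apply: P_integrable; apply: PM.
Qed.

Lemma dotZl c f h : P f -> P h -> dot (fun x => c * f x) h = c * dot f h.
Proof.
move=> Pf Ph; rewrite /dot; under eq_Rintegral do rewrite -mulrA.
by rewrite RintegralZl //; apply: P_integrable; apply: PM.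
Qed.

Lemma dotBl f g h : P f -> P g -> P h ->
  dot (fun x => f x - g x) h = dot f h - dot g h.
Proof.
move=> Pf Pg Ph; rewrite -mulN1r -dotZl // -dotDl //; last exact: PZ.
by congr dot; apply: funext => x; rewrite mulN1r.
Qed.

Lemma dot_suml (I : Type) (r : seq I) (F : I -> T -> R) h :
  (forall i, P (F i)) -> P h ->
  dot (fun x => \sum_(i <- r) F i x) h = \sum_(i <- r) dot (F i) h.
Proof.
move=> PF Ph; elim: r => [|i r IH].
  rewrite big_nil /dot; under eq_Rintegral do rewrite big_nil mul0r.
  by rewrite Rintegral_cst // mul0r.
rewrite big_cons -IH -dotDl //; last exact: P_sum.
by congr dot; apply: funext => x; rewrite big_cons.
Qed.

Definition orthonormal {p} (e : 'I_p -> T -> R) :=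
  forall i j, dot (e i) (e j) = (i == j)%:R.

Definition fourier {p} (e : 'I_p -> T -> R) (h : T -> R) :=
  fun x => \sum_(j < p) dot h (e j) * e j x.

Section Family.
Context {p : nat} {e : 'I_p -> T -> R}.
Hypothesis Pe : forall j, P (e j).

Lemma P_fourier h : P (fourier e h).
Proof. by apply: P_sum => j; apply: PZ. Qed.

Lemma dot_fourierl h g : P g ->
  dot (fourier e h) g = \sum_(j < p) dot h (e j) * dot (e j) g.
Proof.
move=> Pg; rewrite /fourier dot_suml //; last by move=> j; apply: PZ.
by apply: eq_bigr => j _; rewrite dotZl.
Qed.

Hypothesis e_orthonormal : orthonormal e.

Lemma dot_fourier_basis h i : dot (fourier e h) (e i) = dot h (e i).
Proof.
rewrite dot_fourierl // (bigD1 i) //= e_orthonormal eqxx mulr1 big1 ?addr0 //.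
by move=> j /negbTE ji; rewrite e_orthonormal ji mulr0.
Qed.

Lemma dot_fourier_residual h i : P h ->
  dot (fun x => h x - fourier e h x) (e i) = 0.
Proof. by move=> Ph; rewrite dotBl ?dot_fourier_basis ?subrr //; apply: P_fourier. Qed.

Lemma dot_fourier_perp h g : P g -> (forall j, dot (e j) g = 0) ->
  dot (fourier e h) g = 0.
Proof. by move=> Pg perp; rewrite dot_fourierl // big1 // => j _; rewrite perp mulr0. Qed.

Lemma dot_fourier_self h : h =1 fourier e h ->
  dot h h = \sum_(j < p) dot h (e j) ^+ 2.
Proof.
move=> /funext Eh; have Ph : P h by rewrite Eh; apply: P_fourier.
by rewrite {1}Eh dot_fourierl //; apply: eq_bigr => j _; rewrite dotC expr2.
Qed.

Lemma fourier_lincomb m (psi : 'I_m -> T -> R) (c : 'I_m -> R) x :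
  (forall i, P (psi i)) ->
  fourier e (fun y => \sum_(i < m) c i * psi i y) x =
  \sum_(i < m) c i * fourier e (psi i) x.
Proof.
move=> Ppsi.
have dot_lincomb j : dot (fun y => \sum_(i < m) c i * psi i y) (e j) =
    \sum_(i < m) c i * dot (psi i) (e j).
  rewrite dot_suml //; last by move=> i; apply: PZ.
  by apply: eq_bigr => i _; rewrite dotZl.
rewrite /fourier; under eq_bigr do rewrite dot_lincomb big_distrl /=.
rewrite exchange_big /=; apply: eq_bigr => i _; rewrite big_distrr /=.
by apply: eq_bigr => j _; rewrite mulrA.
Qed.

End Family.

Definition fcons {p} (e0 : T -> R) (e : 'I_p -> T -> R) : 'I_p.+1 -> T -> R :=
  fun j => if unlift ord0 j is Some j' then e j' else e0.

Section Fcons.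
Variables (p : nat) (e0 : T -> R) (e : 'I_p -> T -> R).

Lemma fcons0 : fcons e0 e ord0 = e0.
Proof. by rewrite /fcons unlift_none. Qed.

Lemma fconsS j : fcons e0 e (lift ord0 j) = e j.
Proof. by rewrite /fcons liftK. Qed.

Lemma fourier_fcons h x : fourier (fcons e0 e) h x = dot h e0 * e0 x + fourier e h x.
Proof. by rewrite /fourier big_ord_recl fcons0; under eq_bigr do rewrite fconsS. Qed.

Lemma orthonormal_fcons : orthonormal e -> (forall j, dot (e j) e0 = 0) ->
  dot e0 e0 = 1 -> orthonormal (fcons e0 e).
Proof.
move=> eON perp e0_unit i j.
case: (unliftP ord0 i) => [i' ->|->]; case: (unliftP ord0 j) => [j' ->|->];
  rewrite ?fcons0 ?fconsS.
- by rewrite eON (inj_eq lift_inj).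
- by rewrite perp eq_sym (negbTE (neq_lift _ _)).
- by rewrite dotC perp (negbTE (neq_lift _ _)).
- by rewrite e0_unit eqxx.
Qed.

End Fcons.

Lemma gram_schmidt_step p (e : 'I_p -> T -> R) h :
  (forall j, P (e j)) -> orthonormal e -> P h ->
  exists q (e' : 'I_q -> T -> R), [/\ (q <= p.+1)%N, forall j, P (e' j),
    orthonormal e', h =1 fourier e' h &
    forall g, g =1 fourier e g -> g =1 fourier e' g].
Proof.
move=> Pe eON Ph.
pose r x := h x - fourier e h x.
have Pr : P r by apply: PB => //; apply: P_fourier.
have r_perp j : dot (e j) r = 0 by rewrite dotC dot_fourier_residual.
have [r0|rn0] := eqVneq (dot r r) 0.
  exists p, e; split => // x.
  by apply/eqP; rewrite -subr_eq0; apply/eqP/(dot_eq0 Pr r0).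
pose s := Num.sqrt (dot r r).
have s_neq0 : s != 0 by rewrite gt_eqF // sqrtr_gt0 lt_def rn0 dot_ge0.
pose e0 x := s^-1 * r x.
have Pe0 : P e0 by apply: PZ.
have e0_perp j : dot (e j) e0 = 0 by rewrite dotC dotZl // dotC r_perp mulr0.
have dot_r_e0 : dot r e0 = s.
  by rewrite dotC dotZl // -(sqr_sqrtr (dot_ge0 r)) -/s expr2 mulKf.
have dot_h_e0 : dot h e0 = s.
  transitivity (dot (fun x => r x + fourier e h x) e0).
    by congr dot; apply: funext => x; rewrite subrK.
  by rewrite dotDl ?dot_fourier_perp ?addr0 //; apply: P_fourier.
exists p.+1, (fcons e0 e); split => //.
- by move=> j; case: (unliftP ord0 j) => [j' ->|->]; rewrite ?fcons0 ?fconsS.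
- by apply: orthonormal_fcons => //; rewrite dotZl // dot_r_e0 mulVf.
- by move=> x; rewrite fourier_fcons dot_h_e0 /e0 mulVKf // subrK.
- move=> g Eg x; have g_perp : dot g e0 = 0.
    by rewrite (funext Eg) dot_fourier_perp.
  by rewrite fourier_fcons g_perp mul0r add0r.
Qed.

Lemma gram_schmidt m (psi : 'I_m -> T -> R) : (forall i, P (psi i)) ->
  exists p (e : 'I_p -> T -> R), [/\ (p <= m)%N, forall j, P (e j),
    orthonormal e & forall i, psi i =1 fourier e (psi i)].
Proof.
elim: m psi => [|m IH] psi Ppsi; first by exists 0%N, (fun _ _ => 0); split => //; case.
have [p [e [pm Pe eON psi_e]]] := IH (fun i => psi (lift ord0 i)) (fun i => Ppsi _).
have [q [e' [qp Pe' e'ON psi0_e' e_e']]] := @gram_schmidt_step p e _ Pe eON (Ppsi ord0).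
exists q, e'; split => //; first exact: leq_trans qp _.
by move=> i; case: (unliftP ord0 i) => [i' ->|->]; [apply/e_e'/psi_e | exact: psi0_e'].
Qed.

Lemma integral_sum_sqr_orthonormal p (e : 'I_p -> T -> R) :
  (forall j, P (e j)) -> orthonormal e -> \int[mu]_x \sum_(j < p) e j x ^+ 2 = p%:R.
Proof.
move=> Pe eON.
transitivity (dot (fun x => \sum_(j < p) e j x * e j x) (fun=> 1)).
  by apply: eq_Rintegral => x _; rewrite mulr1; under eq_bigr do rewrite expr2.
rewrite dot_suml //; last by move=> j; apply: PM.
rewrite -[p in RHS]card_ord -sumr_const; apply: eq_bigr => j _.
transitivity (dot (e j) (e j)); last by rewrite eON eqxx.
by apply: eq_Rintegral => x _; rewrite mulr1.
Qed.

Lemma reproducing_kernel m (psi : 'I_m -> T -> R) : (forall i, P (psi i)) ->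
  exists K : T -> R, [/\ P K, \int[mu]_x K x <= m%:R &
    forall c : 'I_m -> R, let h y := \sum_(i < m) c i * psi i y in
      forall x, h x ^+ 2 <= dot h h * K x].
Proof.
move=> Ppsi; have [p [e [pm Pe eON psi_e]]] := @gram_schmidt m psi Ppsi.
exists (fun x => \sum_(j < p) e j x ^+ 2); split.
- by apply: P_sum => j; exact: PM.
- by rewrite integral_sum_sqr_orthonormal // ler_nat.
move=> c h x.
have h_e : h =1 fourier e h.
  by move=> y; rewrite /h fourier_lincomb //; apply: eq_bigr => i _; rewrite -psi_e.
by rewrite [h x]h_e (dot_fourier_self Pe h h_e); apply: CauchySchwarz_sum.
Qed.

End OrthonormalExpansion.

Lemma continuous_normrX {R : realType} {X : topologicalType} {h : X -> R} m :
  continuous h -> continuous (fun x => `|h x| ^+ m).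
Proof.
move=> ch x; exact: (continuous_comp (continuous_comp (ch x) (@norm_continuous _ R^o _))
  (@exprn_continuous R m _)).
Qed.

Lemma powR_exprn_inv {R : realType} {a : R} {m} : 0 <= a -> (0 < m)%N ->
  (a ^+ m) `^ (m%:R)^-1 = a.
Proof.
by move=> a0 m0; rewrite -powR_mulrn // -powRrM mulfV ?pnatr_eq0 -?lt0n // powRr1.
Qed.

Section CompactProbability.
Context {R : realType} {X : ptopologicalType}.
Local Notation T := (g_sigma_algebraType (@open X)).
Hypothesis X_compact : compact [set: X].
Variable mu : probability T R.

Lemma measurable_open {U : set X} : open U -> measurable (U : set T).
Proof. exact: sub_sigma_algebra. Qed.

Lemma continuous_measurable_fun (h : X -> R) :
  continuous h -> measurable_fun (setT : set T) h.
Proof.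
move=> /continuousP ch.
apply: (measurability _ (measurable_realfun.RGenOpens.measurableE R)).
move=> _ [_ [a [b ->] <-]]; rewrite setTI; apply: measurable_open.
exact/ch/interval_open.
Qed.

Lemma continuous_bounded {h : X -> R} : continuous h ->
  exists M : R, forall x, `|h x| <= M.
Proof.
move=> ch; have : compact (range h).
  by apply: continuous_compact => //; exact: continuous_subspaceT.
move=> /compact_bounded [M [_ HM]]; exists (M + 1) => x.
by apply: (HM (M + 1)); [rewrite ltrDl | exists x].
Qed.

Lemma continuous_integrable {h : X -> R} : continuous h ->
  mu.-integrable (setT : set T) (EFin \o h).
Proof.
move=> ch; apply: measurable_bounded_integrable => //.
- by apply: (le_lt_trans (probability_le1 mu measurableT)); rewrite ltry.
- exact: continuous_measurable_fun.
have [M hM] := continuous_bounded ch.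
exists M; split; first by rewrite num_real.
by move=> y My x _ /=; rewrite (le_trans (hM x)) // ltW.
Qed.

Lemma has_sup_norm {h : X -> R} : continuous h ->
  has_sup (range (fun x => `|h x|)).
Proof.
move=> /continuous_bounded [M hM]; split; first by exists `|h point|, point.
by exists M => _ [x _ <-].
Qed.

Lemma Lnorm_continuous (h : X -> R) m : continuous h ->
  Lnorm mu (m%:R)%:E (fun x => (h x)%:E) =
  ((\int[mu]_x `|h x| ^+ m) `^ (m%:R)^-1)%:E.
Proof.
move=> ch; rewrite unlock /= -poweR_EFin; congr (_ `^ _)%E.
rewrite /Rintegral fineK.
  by apply: eq_integral => x _; rewrite powR_mulrn.
apply: integrable_fin_num => //.
exact: continuous_integrable (continuous_normrX m ch).
Qed.

Lemma Rintegral_le_cst (h : X -> R) (a : R) : continuous h ->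
  (forall x, h x <= a) -> \int[mu]_x h x <= a.
Proof.
move=> ch ha; rewrite -[leRHS]mulr1 -[X in _ * X](congr1 fine (probability_setT mu)).
rewrite -Rintegral_cst // le_Rintegral //; first exact: continuous_integrable ch.
exact: continuous_integrable (@cst_continuous X _ a).
Qed.

Lemma cst_le_Rintegral (h : X -> R) (a : R) : continuous h ->
  (forall x, a <= h x) -> a <= \int[mu]_x h x.
Proof.
move=> ch ha; rewrite -[leLHS]mulr1 -[X in _ * X](congr1 fine (probability_setT mu)).
rewrite -Rintegral_cst // le_Rintegral //; last exact: continuous_integrable ch.
exact: continuous_integrable (@cst_continuous X _ a).
Qed.

Lemma Lnorm_le_sup_norm (h : X -> R) m : continuous h -> (0 < m)%N ->
  (Lnorm mu (m%:R)%:E (fun x => (h x)%:E) <= (sup (range (fun x => `|h x|)))%:E)%E.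
Proof.
move=> ch m0; pose M := sup (range (fun x => `|h x|)).
have hM x : `|h x| <= M by apply: (sup_upper_bound (has_sup_norm ch)); exists x.
have M0 : 0 <= M := le_trans (normr_ge0 _) (hM point).
rewrite Lnorm_continuous // lee_fin -[leRHS](powR_exprn_inv M0 m0).
apply: ge0_ler_powR; rewrite ?inE ?nnegrE ?invr_ge0 ?exprn_ge0 //.
  by apply: Rintegral_ge0 => x _; rewrite exprn_ge0.
apply: Rintegral_le_cst; first exact: continuous_normrX.
by move=> x; rewrite lerXn2r ?inE ?nnegrE.
Qed.

Lemma sup_norm_le_Lnorm (h : X -> R) m (C : R) :
  continuous h -> (0 < m)%N -> 0 <= C ->
  (forall x, `|h x| ^+ m <= C * \int[mu]_y `|h y| ^+ m) ->
  ((sup (range (fun x => `|h x|)))%:E <=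
    (C `^ (m%:R)^-1)%:E * Lnorm mu (m%:R)%:E (fun x => (h x)%:E))%E.
Proof.
move=> ch m0 C0 hC.
have I0 : 0 <= \int[mu]_y `|h y| ^+ m by apply: Rintegral_ge0 => y _; rewrite exprn_ge0.
rewrite Lnorm_continuous // -EFinM lee_fin -powRM //.
apply: ge_sup; first by exists `|h point|, point.
move=> _ [x _ <-]; rewrite -(powR_exprn_inv (normr_ge0 (h x)) m0).
by apply: ge0_ler_powR; rewrite ?inE ?nnegrE ?invr_ge0 ?exprn_ge0 ?mulr_ge0.
Qed.

End CompactProbability.

Section HaarMeasure.
Context {R : realType} {G : TopGroup.type}.
Local Notation T := (g_sigma_algebraType (@open G)).
Hypothesis G_compact : compact [set: G].
Hypothesis mul_cont : continuous (fun p : G * G => (p.1 * p.2)%g).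
Variable mu : probability T R.
Hypothesis mu_linv : forall (g : G) (A : set T),
  measurable A -> mu [set (g * x)%g | x in A] = mu A.

Lemma continuous_lmul (z : G) : continuous (fun y : G => (z * y)%g).
Proof.
move=> y; apply: (@continuous_comp _ _ _ (pair z) (fun p : G * G => (p.1 * p.2)%g)).
  by apply: cvg_pair; [exact: cvg_cst | exact: cvg_id].
exact: mul_cont.
Qed.

Lemma lmul_preimage (z : G) (A : set G) :
  (fun y => (z * y)%g) @^-1` A = [set (z^-1 * x)%g | x in A].
Proof.
apply/seteqP; split => [y /= Ay|_ [x Ax <-]] /=; last by rewrite mulVKg.
by exists (z * y)%g => //; rewrite mulKg.
Qed.

Lemma open_lmul (z : G) {U : set G} : open U -> open [set (z * x)%g | x in U].
Proof.
move=> oU; rewrite -[z]invgK -lmul_preimage.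
exact: (continuousP _).1 (continuous_lmul _) _ oU.
Qed.

Lemma measurable_lmul (z : G) : measurable_fun (setT : set T) (fun t : T => (z * t)%g : T).
Proof.
apply: (@measurability _ _ T T setT _ (@open G)) => // _ [A oA <-].
rewrite setTI lmul_preimage; apply: measurable_open; exact: open_lmul.
Qed.

Lemma haar_open_gt0 {U : set G} : open U -> U !=set0 -> (0 < mu U)%E.
Proof.
(* Otherwise finitely many null translates of [U] would cover [G]. *)
move=> oU [u0 Uu0]; rewrite lt0e measure_ge0 andbT; apply/negP => /eqP U0.
pose tr x := [set (x * y)%g | y in U].
have tr_null x : mu.-negligible (tr x : set T).
  exists (tr x); split => //; first exact: measurable_open (open_lmul x oU).
  by rewrite mu_linv //; exact: measurable_open.
have tr_cover : [set: G] `<=` \bigcup_(x in [set: G]) tr x.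
  by move=> g _; exists (g * u0^-1)%g => //; exists u0 => //; rewrite mulgVK.
have [D _ D_cover] : finite_subset_cover [set: G] tr [set: G].
  by move: G_compact; rewrite compact_cover; apply=> // x _; exact: open_lmul.
rewrite /cover bigcup_fset in D_cover.
have : mu.-negligible [set: T].
  apply: (@negligibleS _ _ _ mu _ _ D_cover).
  elim/big_ind: _ => //; first exact: negligible_set0.
  by move=> A B; exact: (@negligibleU _ _ _ mu A B).
move/(negligibleP _ measurableT) => null_setT.
by have := probability_setT mu; rewrite null_setT => /eqP; rewrite eq_sym onee_eq0.
Qed.

Lemma haar_continuous_sqr_eq0 (h : G -> R) : continuous h ->
  \int[mu]_x (h x * h x) = 0 -> forall x, h x = 0.
Proof.
(* Otherwise [h^2 > c > 0] on a nonempty open set, which has positive measure. *)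
move=> ch int0 x0; apply/eqP/contraT => hx0.
have ch2 : continuous (fun y => h y * h y) by move=> y; exact: continuousM (ch y) (ch y).
have hx0_sq : 0 < h x0 * h x0 by rewrite -expr2 lt_def sqrf_eq0 hx0 sqr_ge0.
pose c := h x0 * h x0 / 2.
have c_gt0 : 0 < c by rewrite divr_gt0.
pose U := (fun y => h y * h y) @^-1` `]c, +oo[%classic.
have oU : open U by move/continuousP: ch2; apply; apply: interval_open.
have Ux0 : U x0 by rewrite /U /= in_itv /= andbT /c ltr_pdivrMr // ltr_pMr // ltr1n.
have muU_gt0 : (0 < mu U)%E := haar_open_gt0 oU (ex_intro _ x0 Ux0).
have h2_int := continuous_integrable G_compact mu ch2.
have int0E : (\int[mu]_x (h x * h x)%:E = 0)%E.
  by rewrite -[LHS]fineK ?(integrable_fin_num _ h2_int) // -/(Rintegral _ _ _) int0.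
have : (c%:E * mu U <= 0)%E.
  rewrite -int0E -integral_cst; last exact: measurable_open.
  apply: (@le_trans _ _ (\int[mu]_(x in (U : set T)) (h x * h x)%:E)%E).
    apply: ge0_le_integral => //; first exact: measurable_open.
    - by move=> x _; rewrite lee_fin ltW.
    - exact: measurable_funS (measurable_int mu h2_int).
    - by move=> x; rewrite /U /= in_itv /= andbT lee_fin; apply: ltW.
  apply: ge0_subset_integral => //.
  - exact: measurable_open.
  - exact (measurable_int mu h2_int).
  - by move=> x _; rewrite lee_fin -expr2 sqr_ge0.
by rewrite leNgt mule_gt0 ?lte_fin.
Qed.

Lemma haar_integral_lmul (F : G -> R) (z : G) : continuous F ->
  \int[mu]_t F (z * t)%g = \int[mu]_t F t.
Proof.
move=> cF; pose lz := fun t : T => (z * t)%g : T.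
have cFz : continuous (F \o lz).
  by move=> t; apply: continuous_comp; [exact: continuous_lmul | exact: cF].
have mF := measurable_int mu (continuous_integrable G_compact mu cF).
have iFz : mu.-integrable (lz @^-1` setT) ((EFin \o F) \o lz).
  by rewrite preimage_setT; exact (continuous_integrable G_compact mu cFz).
rewrite /Rintegral; congr fine.
transitivity (\int[pushforward mu lz]_x (EFin \o F) x)%E.
  by rewrite (integral_pushforward (measurable_lmul z) mF iFz measurableT) preimage_setT.
apply: eq_measure_integral; first exact: measurable_lmul.
move=> mlz A mA _ /=; rewrite /pushforward (lmul_preimage z A : lz @^-1` A = _).
by rewrite mu_linv.
Qed.

End HaarMeasure.

Lemma linear_sum_delta {R : realType} {n} (L : 'cV[R]_n -> R) :
  (forall a u w, L (a *: u + w) = a * L u + L w) ->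
  forall x, L x = \sum_(i < n) x i 0 * L (delta_mx i 0).
Proof.
move=> L_lin x; have L0 : L 0 = 0.
  by move: (L_lin 1 0 0); rewrite scale1r addr0 mul1r; lra.
have L_sum (r : seq 'I_n) (c : 'I_n -> R) (u : 'I_n -> 'cV[R]_n) :
    L (\sum_(i <- r) c i *: u i) = \sum_(i <- r) c i * L (u i).
  by elim: r => [|i r IH]; rewrite ?big_nil // !big_cons L_lin IH.
rewrite {1}(matrix_sum_delta x); under eq_bigr do rewrite big_ord1.
exact: L_sum.
Qed.

(* The nondecreasing tuple [i_1 <= ... <= i_k] stands for the monomial
   [x_(i_1) * ... * x_(i_k)]. *)
Definition sorted_tuples n k :=
  [set t : k.-tuple 'I_n | sorted leq [seq val i | i <- t]]%SET.

Definition monomial {R : realType} {n k} (t : k.-tuple 'I_n) (x : 'cV[R]_n) :=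
  \prod_(i <- t) x i 0.

Section SortTuple.
Context {n k : nat}.

Lemma size_sort_codom (f : {ffun 'I_k -> 'I_n}) :
  size (sort (relpre val leq) (codom f)) == k.
Proof. by rewrite size_sort size_codom card_ord. Qed.

Definition sort_tuple (f : {ffun 'I_k -> 'I_n}) := Tuple (size_sort_codom f).

Lemma sort_tuple_sorted f : sort_tuple f \in sorted_tuples n k.
Proof. by rewrite inE sorted_map; apply: sort_sorted => a b; exact: leq_total. Qed.

Lemma monomial_sort_tuple {R : realType} f (x : 'cV[R]_n) :
  monomial (sort_tuple f) x = \prod_(j < k) x (f j) 0.
Proof. by rewrite /monomial (perm_big _ (permEl (perm_sort _ _))) codomE big_map big_enum. Qed.

End SortTuple.

Lemma power_monomial_expand {R : realType} {n} k (a : 'I_n -> R) :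
  exists c : k.-tuple 'I_n -> R, forall x : 'cV[R]_n,
    (\sum_(i < n) x i 0 * a i) ^+ k = \sum_(t in sorted_tuples n k) c t * monomial t x.
Proof.
exists (fun t => \sum_(f : {ffun 'I_k -> 'I_n} | sort_tuple f == t) \prod_(j < k) a (f j)) => x.
rewrite -[k in LHS]card_ord -prodr_const bigA_distr_bigA /=.
rewrite (partition_big (@sort_tuple n k) (mem (sorted_tuples n k))) => [|f _]; last first.
  exact: sort_tuple_sorted.
apply: eq_bigr => t _; rewrite big_distrl /=; apply: eq_bigr => f /eqP <-.
by rewrite big_split /= monomial_sort_tuple mulrC.
Qed.

Lemma card_sorted_tuples_binomial n k : (0 < k)%N ->
  #|sorted_tuples n k| = 'C(n + k - 1, k).
Proof.
move=> k_gt0; case: n => [|n].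
  rewrite bin_small; last by rewrite add0n subn1 prednK.
  apply/eqP; rewrite -leqn0 (leq_trans (max_card _)) //.
  by rewrite card_tuple card_ord exp0n.
by rewrite /sorted_tuples card_sorted_tuples addSn subn1 /= addnC.
Qed.

Section OrbitBound.
Context {R : realType} {G : TopGroup.type}.
Local Notation T := (g_sigma_algebraType (@open G)).
Hypothesis G_compact : compact [set: G].
Hypothesis mul_cont : continuous (fun p : G * G => (p.1 * p.2)%g).
Variable mu : probability T R.
Hypothesis mu_linv : forall (g : G) (A : set T),
  measurable A -> mu [set (g * x)%g | x in A] = mu A.
Variables (n : nat) (act : G -> 'cV[R]_n -> 'cV[R]_n).
Hypothesis act_linear : forall (g : G) (a : R) (u w : 'cV[R]_n),
  act g (a *: u + w) = a *: act g u + act g w.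
Hypothesis act_mul : forall (g h : G) (u : 'cV[R]_n),
  act (g * h)%g u = act g (act h u).
Hypothesis act_cont : continuous (fun p : G * 'cV[R]_n => act p.1 p.2).
Variables (v : 'cV[R]_n) (l : 'cV[R]_n -> R).
Hypothesis l_linear : forall (a : R) (u w : 'cV[R]_n),
  l (a *: u + w) = a * l u + l w.

Lemma continuous_orbit : continuous (fun g => act g v).
Proof.
move=> g; apply: (@continuous_comp _ _ _ (fun g => (g, v)) (fun p : G * 'cV[R]_n => act p.1 p.2)).
  exact: (@cvg_pair _ _ _ (nbhs g) (nbhs g) (nbhs v) _ _ _ id (fun=> v) cvg_id (cvg_cst v)).
exact: act_cont.
Qed.

Lemma continuous_orbit_coord i : continuous (fun g => act g v i 0).
Proof.
move=> g; apply: (@continuous_comp _ _ _ (fun g => act g v) (fun M : 'cV[R]_n => M i 0)).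
  exact: continuous_orbit.
exact: coord_continuous.
Qed.

Lemma continuous_orbit_form : continuous (fun g => l (act g v)).
Proof.
have -> : (fun g => l (act g v)) = fun g => \sum_(i < n) act g v i 0 * l (delta_mx i 0).
  by apply: funext => g; exact: linear_sum_delta.
apply: continuous_big => [|i _]; first exact: add_continuous.
by move=> g; apply: continuousM; [exact: continuous_orbit_coord | exact: cst_continuous].
Qed.

Lemma orbit_power_translate k (z : G) : exists c : k.-tuple 'I_n -> R, forall t,
  l (act (z * t)%g v) ^+ k = \sum_(s in sorted_tuples n k) c s * monomial s (act t v).
Proof.
pose L x := l (act z x).
have L_lin a u w : L (a *: u + w) = a * L u + L w by rewrite /L act_linear l_linear.
have [c hc] := power_monomial_expand k (fun i => L (delta_mx i 0)).
by exists c => t; rewrite -hc act_mul -/(L _) (linear_sum_delta L L_lin).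
Qed.

Lemma orbit_power_bound k : (0 < k)%N -> forall g,
  `|l (act g v)| ^+ (2 * k) <=
    'C(n + k - 1, k)%:R * \int[mu]_y `|l (act y v)| ^+ (2 * k).
Proof.
move=> k_gt0 g; set N := \int[mu]_y _.
pose f y := l (act y v).
have cf : continuous f := continuous_orbit_form.
have normX2 (x : R) : `|x| ^+ (2 * k) = (x ^+ k) ^+ 2.
  by rewrite mulnC exprM -normrX real_normK ?num_real.
pose P (h : T -> R) := continuous (h : G -> R).
have PD h1 h2 : P h1 -> P h2 -> P (fun x => h1 x + h2 x).
  by move=> c1 c2 x; exact: continuousD (c1 x) (c2 x).
have PM h1 h2 : P h1 -> P h2 -> P (fun x => h1 x * h2 x).
  by move=> c1 c2 x; exact: continuousM (c1 x) (c2 x).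
pose psi (i : 'I_#|sorted_tuples n k|) (t : T) := monomial (enum_val i) (act t v).
have Ppsi i : P (psi i).
  by apply: continuous_big => [|j _]; [exact: mul_continuous | exact: continuous_orbit_coord].
have [K [PK K_int K_bound]] := reproducing_kernel mu P (fun c => @cst_continuous G _ c)
  PD PM (fun h => @continuous_integrable _ _ G_compact mu h)
  (haar_continuous_sqr_eq0 G_compact mul_cont mu mu_linv) _ _ Ppsi.
have fg_le y : `|f g| ^+ (2 * k) <= N * K y.
  (* The translate [t |-> f (g y^-1 t) ^+ k] of [f ^+ k] lies in the span of [psi],
     has the same L^2 norm as [f ^+ k], and takes the value [f g ^+ k] at [y]. *)
  have [c hc] := orbit_power_translate k (g * y^-1)%g.
  pose h t := \sum_(i < #|sorted_tuples n k|) c (enum_val i) * psi i t.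
  have : h y ^+ 2 <= dot mu h h * K y := K_bound (fun i => c (enum_val i)) y.
  have hE t : h t = f (g * y^-1 * t)%g ^+ k.
    by rewrite /h /psi /f hc [RHS]big_enum_val.
  have -> : dot mu h h = N.
    rewrite /dot; under eq_Rintegral do rewrite hE -expr2 -normX2.
    by apply: haar_integral_lmul (continuous_normrX _ cf).
  by rewrite hE mulgVK normX2.
have cNK : continuous (fun y => N * K y).
  by move=> y; exact: (continuousM (@cst_continuous G _ N y) (PK y)).
apply: (le_trans (cst_le_Rintegral G_compact mu _ _ cNK fg_le)).
rewrite RintegralZl //; last exact (continuous_integrable G_compact mu PK).
rewrite -(card_sorted_tuples_binomial n k k_gt0) mulrC ler_wpM2r //.
by apply: Rintegral_ge0 => y _; rewrite exprn_ge0.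
Qed.

End OrbitBound.

Theorem corollary1p5
  (R : realType) (G : TopGroup.type)
  (G_hausdorff : hausdorff_space G)
  (G_compact : compact [set: G])
  (mul_cont : continuous (fun p : G * G => (p.1 * p.2)%g))
  (inv_cont : continuous (fun x : G => (x^-1)%g))
  (mu : probability (g_sigma_algebraType (@open G)) R)
  (mu_linv : forall (g : G) (A : set (g_sigma_algebraType (@open G))),
      measurable A -> mu [set (g * x)%g | x in A] = mu A)
  (mu_outer_reg : forall A : set (g_sigma_algebraType (@open G)),
      measurable A ->
      mu A = ereal_inf [set mu U | U in [set U | open (U : set G) /\ A `<=` U]])
  (mu_inner_reg : forall U : set (g_sigma_algebraType (@open G)),
      open (U : set G) ->
      mu U = ereal_sup [set mu K | K in [set K | compact (K : set G) /\ K `<=` U]])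
  (n : nat) (act : G -> 'cV[R]_n -> 'cV[R]_n)
  (act_linear : forall (g : G) (a : R) (u w : 'cV[R]_n),
      act g (a *: u + w) = a *: act g u + act g w)
  (act_one : forall u : 'cV[R]_n, act 1%g u = u)
  (act_mul : forall (g h : G) (u : 'cV[R]_n), act (g * h)%g u = act g (act h u))
  (act_cont : continuous (fun p : G * 'cV[R]_n => act p.1 p.2))
  (v : 'cV[R]_n) (l : 'cV[R]_n -> R)
  (l_linear : forall (a : R) (u w : 'cV[R]_n), l (a *: u + w) = a * l u + l w)
  (k : nat) (k_pos : (0 < k)%N) :
  let f := fun g : G => l (act g v) in
  let norm2k := Lnorm mu (((2 * k)%:R : R)%:E) (fun g => (f g)%:E) in
  let norminf := sup (range (fun g : G => `|f g|)) in
  (norm2k <= norminf%:E)%E /\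
  (norminf%:E <= ((('C(n + k - 1, k))%:R : R) `^ ((2 * k)%:R)^-1)%:E * norm2k)%E.
Proof.
move=> f norm2k norminf.
have k2_gt0 : (0 < 2 * k)%N by rewrite muln_gt0.
have cf : continuous f := continuous_orbit_form _ _ act_cont _ _ l_linear.
split; first exact: (Lnorm_le_sup_norm G_compact mu _ _ cf k2_gt0).
apply: (sup_norm_le_Lnorm G_compact mu _ _ _ cf k2_gt0 (ler0n _ _)).
exact: (orbit_power_bound G_compact mul_cont mu mu_linv _ _ act_linear act_mul act_cont
  _ _ l_linear _ k_pos).
Qed.
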